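(* Let $A$ be a positive $2\times 2$ row stochastic matrix that is not column stochastic. If the column scaled matrix $A\,Y(A)$ is doubly stochastic, then $A=\begin{pmatrix} a & 1-a\\ a & 1-a\end{pmatrix}$ for some $a\in(0,1)$ with $a\neq 1/2$, and $S(A)=A\,Y(A)=\begin{pmatrix} 1/2 & 1/2\\ 1/2 & 1/2\end{pmatrix}$. Let $A$ be a positive $2\times 2$ column stochastic matrix that is not row stochastic. If the row scaled matrix $X(A)\,A$ is doubly stochastic, then $A=\begin{pmatrix} a & a\\ 1-a & 1-a\end{pmatrix}$ for some $a\in(0,1)$ with $a\neq 1/2$, and $S(A)=X(A)\,A=\begin{pmatrix} 1/2 & 1/2\\ 1/2 & 1/2\end{pmatrix}$.
   Context: A positive matrix has all entries positive. For an $n\times n$ matrix $A=(a_{i,j})$ let $\mathrm{row}_i(A)=\sum_j a_{i,j}$ and $\mathrm{col}_j(A)=\sum_i a_{i,j}$. $A$ is row stochastic if all row sums equal $1$, column stochastic if all column sums equal $1$, and doubly stochastic if both. For positive $A$ let $X(A)=\mathrm{diag}(1/\mathrm{row}_1(A),\ldots,1/\mathrm{row}_n(A))$ and $Y(A)=\mathrm{diag}(1/\mathrm{col}_1(A),\ldots,1/\mathrm{col}_n(A))$. $S(A)$ denotes the alternate minimization limit of $A$: the limit of the sequence $A^{(0)}=A$, $A^{(2k+1)}=A^{(2k)}\,Y(A^{(2k)})$, $A^{(2k+2)}=X(A^{(2k+1)})\,A^{(2k+1)}$ ($k\ge 0$), which converges to a doubly stochastic matrix and which is unchanged if $A$ is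 replaced by $PAQ$ for positive diagonal $P,Q$. *)

From HB Require Import structures.
From mathcomp Require Import all_boot all_order all_algebra.
From mathcomp Require Import all_classical all_reals all_analysis.
Set Implicit Arguments. Unset Strict Implicit. Unset Printing Implicit Defensive.
Import Order.TTheory GRing.Theory Num.Theory.
Import numFieldNormedType.Exports.
Local Open Scope ring_scope.

Section Defs.
Variables (R : realType) (n : nat).
Implicit Types A : 'M[R]_n.

Definition rowsum A (i : 'I_n) : R := \sum_(j < n) A i j.
Definition colsum A (j : 'I_n) : R := \sum_(i < n) A i j.

Definition positive_mx A : Prop := forall i j, 0 < A i j.
Definition row_stochastic A : Prop := forall i, rowsum A i = 1.
Definition col_stochastic A : Prop := forall j, colsum A j = 1.
Definition doubly_stochastic A : Prop := row_stochastic A /\ col_stochastic A.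

Definition Xmx A : 'M[R]_n := diag_mx (\row_i (rowsum A i)^-1).
Definition Ymx A : 'M[R]_n := diag_mx (\row_j (colsum A j)^-1).

Fixpoint am_seq A (k : nat) : 'M[R]_n :=
  match k with
  | 0 => A
  | k'.+1 => let B := am_seq A k' in
             if odd k' then Xmx B *m B else B *m Ymx B
  end.

End Defs.

From HB Require Import structures.
From mathcomp Require Import all_boot all_order all_algebra.
From mathcomp Require Import all_classical all_reals all_analysis.
From mathcomp Require Import ring lra.
Set Implicit Arguments. Unset Strict Implicit. Unset Printing Implicit Defensive.
Import Order.TTheory GRing.Theory Num.Theory.
Import numFieldNormedType.Exports.
Local Open Scope classical_set_scope.
Local Open Scope ring_scope.

(* Writing the rows of A as (p, 1 - p) and (q, 1 - q), the row sums of A Y(A)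
   are x / c + (1 - x) / (2 - c) for x = p, q, where c = p + q is the first
   column sum.  Unless c = 1, i.e. unless A is already column stochastic, this
   is an injective affine function of x, so A Y(A) row stochastic forces p = q;
   then A Y(A) has all entries 1/2.  The column version follows by
   transposition.  A doubly stochastic matrix is fixed by both scalings, so the
   alternate minimization sequence is constant from A Y(A) (resp. X(A) A) on. *)

Section Scaling.
Variables (R : realType) (n : nat).
Implicit Types A : 'M[R]_n.

Lemma rowsum_tr A i : rowsum A^T i = colsum A i.
Proof. by apply: eq_bigr => j _; rewrite mxE. Qed.

Lemma colsum_tr A j : colsum A^T j = rowsum A j.
Proof. by apply: eq_bigr => i _; rewrite mxE. Qed.

Lemma positive_mx_tr A : positive_mx A -> positive_mx A^T.
Proof. by move=> Apos i j; rewrite mxE. Qed.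

Lemma row_stochastic_tr A : row_stochastic A^T <-> col_stochastic A.
Proof. by split=> Ast i; [rewrite -rowsum_tr | rewrite rowsum_tr]. Qed.

Lemma col_stochastic_tr A : col_stochastic A^T <-> row_stochastic A.
Proof. by split=> Ast i; [rewrite -colsum_tr | rewrite colsum_tr]. Qed.

Lemma doubly_stochastic_tr A : doubly_stochastic A^T <-> doubly_stochastic A.
Proof.
by rewrite /doubly_stochastic row_stochastic_tr col_stochastic_tr; split=> [[]|[]].
Qed.

Lemma Ymx_tr A : Ymx A^T = Xmx A.
Proof. by apply/matrixP => i j; rewrite !mxE colsum_tr. Qed.

Lemma trmx_Xmx_mul A : (Xmx A *m A)^T = A^T *m Ymx A^T.
Proof. by rewrite trmx_mul Ymx_tr /Xmx tr_diag_mx. Qed.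

Lemma Xmx_mul_row_stochastic A : row_stochastic A -> Xmx A *m A = A.
Proof. by move=> Ast; apply/matrixP => i j; rewrite mul_diag_mx !mxE Ast invr1 mul1r. Qed.

Lemma mul_Ymx_col_stochastic A : col_stochastic A -> A *m Ymx A = A.
Proof. by move=> Ast; apply/matrixP => i j; rewrite mul_mx_diag !mxE Ast invr1 mulr1. Qed.

Lemma am_seq_doubly_stochastic_const A k :
  doubly_stochastic (am_seq A k) -> forall m, am_seq A (m + k) = am_seq A k.
Proof.
move=> [Brs Bcs]; elim=> [|m IHm] //=; rewrite IHm.
by case: ifP => _; [apply: Xmx_mul_row_stochastic | apply: mul_Ymx_col_stochastic].
Qed.

Lemma am_seq_cvg_doubly_stochastic A k : doubly_stochastic (am_seq A k) ->
  forall i j, (fun m => am_seq A m i j) @ \oo --> am_seq A k i j.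
Proof.
move=> Bds i j; apply: cvg_near_cst; exists k => // m /= km.
by rewrite -(subnK km) am_seq_doubly_stochastic_const.
Qed.

End Scaling.

Section TwoByTwo.
Variable R : realType.
Implicit Types A : 'M[R]_2.

Lemma ord2P (i : 'I_2) : i = 0 \/ i = 1.
Proof. by case: i => [[|[|//]]] ?; [left | right]; apply: val_inj. Qed.

Lemma sum_ord2 (F : 'I_2 -> R) : \sum_(i < 2) F i = F 0 + F 1.
Proof. by rewrite !big_ord_recl big_ord0 addr0; congr (_ + F _); apply: val_inj. Qed.

Lemma affine_row_sum_inj (c d x y : R) : c != d ->
  x / c + (1 - x) / d = 1 -> y / c + (1 - y) / d = 1 -> x = y.
Proof.
move=> cd hx hy.
have : (x - y) * (c^-1 - d^-1) = (x / c + (1 - x) / d) - (y / c + (1 - y) / d).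
  by ring.
rewrite hx hy subrr => /eqP.
by rewrite mulf_eq0 !subr_eq0 (inj_eq invr_inj) (negbTE cd) orbF => /eqP.
Qed.

Lemma colscaled_row_stochastic2 A :
  positive_mx A -> row_stochastic A -> ~ col_stochastic A ->
  row_stochastic (A *m Ymx A) ->
  exists a : R, 0 < a < 1 /\ a != 2^-1 /\
    A = \matrix_(i < 2, j < 2) (if j == 0 then a else 1 - a).
Proof.
move=> Apos Ars Ancs AYrs.
have row1 i : A i 1 = 1 - A i 0.
  by have := Ars i; rewrite /rowsum sum_ord2 => <-; rewrite addrC addKr.
have c1 : colsum A 1 = 2 - colsum A 0.
  by rewrite /colsum !sum_ord2 !row1; ring.
have c0_neq1 : colsum A 0 != 1.
  apply/eqP => c01; apply: Ancs => j.
  by case: (ord2P j) => ->; rewrite ?c1 c01 //; lra.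
have row_eq i : A i 0 / colsum A 0 + (1 - A i 0) / colsum A 1 = 1.
  by have := AYrs i; rewrite /rowsum sum_ord2 !mul_mx_diag !mxE row1.
have A10 : A 1 0 = A 0 0.
  apply: (affine_row_sum_inj _ (row_eq 1) (row_eq 0)).
  rewrite c1; apply: contra c0_neq1 => /eqP ?; apply/eqP; lra.
have A00_pos := Apos 0 0; have A01_pos := Apos 0 1.
exists (A 0 0); split; first by rewrite A00_pos -subr_gt0 -row1.
split.
  by apply: contra c0_neq1 => /eqP a_half; rewrite /colsum sum_ord2 A10 a_half; apply/eqP; field.
apply/matrixP => i j; rewrite mxE.
by case: (ord2P i) => ->; case: (ord2P j) => ->; rewrite ?row1 ?A10.
Qed.

Lemma colscaled_const_rows2 A (a : R) : 0 < a < 1 ->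
  A = \matrix_(i < 2, j < 2) (if j == 0 then a else 1 - a) ->
  A *m Ymx A = \matrix_(i < 2, j < 2) (2^-1 : R).
Proof.
move=> a01 ->; apply/matrixP => i j.
rewrite mul_mx_diag !mxE /colsum sum_ord2 !mxE.
by case: (ord2P j) => -> /=; field; apply/eqP; lra.
Qed.

Lemma colscaled_doubly_stochastic2 A :
  positive_mx A -> row_stochastic A -> ~ col_stochastic A ->
  doubly_stochastic (A *m Ymx A) ->
  (exists a : R, 0 < a < 1 /\ a != 2^-1 /\
     A = \matrix_(i < 2, j < 2) (if j == 0 then a else 1 - a)) /\
  A *m Ymx A = \matrix_(i < 2, j < 2) (2^-1 : R).
Proof.
move=> Apos Ars Ancs [AYrs _].
have [a [a01 [a_half A_eq]]] := colscaled_row_stochastic2 Apos Ars Ancs AYrs.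
by split; [exists a | apply: colscaled_const_rows2 A_eq].
Qed.

Lemma rowscaled_doubly_stochastic2 A :
  positive_mx A -> col_stochastic A -> ~ row_stochastic A ->
  doubly_stochastic (Xmx A *m A) ->
  (exists a : R, 0 < a < 1 /\ a != 2^-1 /\
     A = \matrix_(i < 2, j < 2) (if i == 0 then a else 1 - a)) /\
  Xmx A *m A = \matrix_(i < 2, j < 2) (2^-1 : R).
Proof.
move=> Apos Acs Anrs XAds.
have ATrs : row_stochastic A^T by apply/row_stochastic_tr.
have ATncs : ~ col_stochastic A^T by move/col_stochastic_tr.
have ATds : doubly_stochastic (A^T *m Ymx A^T).
  by rewrite -trmx_Xmx_mul; apply/doubly_stochastic_tr.
have [[a [a01 [a_half AT_eq]]] AY] :=
  colscaled_doubly_stochastic2 (positive_mx_tr Apos) ATrs ATncs ATds.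
split.
  exists a; do 2!split=> //.
  by rewrite -[A]trmxK AT_eq; apply/matrixP => i j; rewrite !mxE.
by apply: trmx_inj; rewrite trmx_Xmx_mul AY; apply/matrixP => i j; rewrite !mxE.
Qed.

End TwoByTwo.

Theorem theorem8 (R : realType) :
  (forall A : 'M[R]_2,
     positive_mx A -> row_stochastic A -> ~ col_stochastic A ->
     doubly_stochastic (A *m Ymx A) ->
     (exists a : R, 0 < a < 1 /\ a != 2^-1 /\
        A = \matrix_(i < 2, j < 2) (if j == 0 then a else 1 - a)) /\
     (forall i j, (fun k => am_seq A k i j) @ \oo --> (2^-1 : R)) /\
     A *m Ymx A = \matrix_(i < 2, j < 2) (2^-1 : R))
  /\
  (forall A : 'M[R]_2,
     positive_mx A -> col_stochastic A -> ~ row_stochastic A ->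
     doubly_stochastic (Xmx A *m A) ->
     (exists a : R, 0 < a < 1 /\ a != 2^-1 /\
        A = \matrix_(i < 2, j < 2) (if i == 0 then a else 1 - a)) /\
     (forall i j, (fun k => am_seq A k i j) @ \oo --> (2^-1 : R)) /\
     Xmx A *m A = \matrix_(i < 2, j < 2) (2^-1 : R)).
Proof.
split=> A Apos Ast Anst Ads.
- have [A_eq AY] := colscaled_doubly_stochastic2 Apos Ast Anst Ads.
  split=> //; split=> // i j.
  have -> : 2^-1 = am_seq A 1 i j by rewrite /= AY mxE.
  exact: am_seq_cvg_doubly_stochastic.
- have [A_eq XA] := rowscaled_doubly_stochastic2 Apos Ast Anst Ads.
  have A2 : am_seq A 2 = Xmx A *m A by rewrite /= mul_Ymx_col_stochastic.
  split=> //; split=> // i j.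
  have -> : 2^-1 = am_seq A 2 i j by rewrite A2 XA mxE.
  by apply: am_seq_cvg_doubly_stochastic; rewrite A2.
Qed.
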